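(* Let $n\ge1$, let $T=(T_{ii'jj'kk'})\in(\mathbb C^n)^{\otimes6}$ be nonzero and Hermitian when viewed as an operator on $\mathbb C^{n^3}$ (rows indexed by $(i,j,k)$, columns by $(i',j',k')$). Let $\mathcal S=\{P_1,\dots,P_{n^2}\}$ be a basis of $M_n$, orthogonal for the Hilbert–Schmidt inner product, consisting of Hermitian matrices with $P^2=\mathrm{Id}$. For $P,Q,R\in\mathcal S$ put $G_{P,Q,R}=\sum T_{ii'jj'kk'}\overline{P_{ii'}Q_{jj'}R_{kk'}}\in\mathbb R$ and $Z=\sum_{P,Q,R}|G_{P,Q,R}|$, and assume $Z>0$. Let $G$ be the three-player XOR game in which the triple $(P,Q,R)$ is asked with probability $|G_{P,Q,R}|/Z$ and the answers are accepted iff their parity matches the sign of $G_{P,Q,R}$. Then $\beta(G)\le Z^{-1}n^{9/2}\|T\|_{3,\epsilon}$ and $\beta^*(G)\ge Z^{-1}n^3\|T\|_{2,\epsilon}$; in particular $\beta^*(G)\ge n^{-3/2}\frac{\|T\|_{2,\epsilon}}{\|T\|_{3,\epsilon}}\beta(G)$.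
   Context: $\|T\|_{2,\epsilon}$ is the operator norm of $T$ viewed as an operator on $\mathbb C^{n^3}$ (equivalently the injective norm of $T\in\mathbb C^{n^3}\otimes\mathbb C^{n^3}$). $\|T\|_{3,\epsilon}=\sup|\sum T_{ii'jj'kk'}U_{ii'}V_{jj'}W_{kk'}|$ over $U,V,W\in\mathbb C^{n^2}$ of Euclidean norm at most $1$ (the injective norm of $T\in\mathbb C^{n^2}\otimes\mathbb C^{n^2}\otimes\mathbb C^{n^2}$). For a three-player XOR game with question distribution $\pi(x,y,z)$ and target signs $s_{xyz}\in\{\pm1\}$, the classical bias is $\beta(G)=\max_{a_x,b_y,c_z\in\{\pm1\}}|\sum\pi(x,y,z)s_{xyz}a_xb_yc_z|$ and the entangled bias is $\beta^*(G)=\sup|\sum\pi(x,y,z)s_{xyz}\langle\psi|A_x\otimes B_y\otimes C_z|\psi\rangle|$ over all $d$, unit $|\psi\rangle\in(\mathbb C^d)^{\otimes3}$ and Hermitian $A_x,B_y,C_z\in M_d$ squaring to the identity (observables). *)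

From Stdlib Require Import Reals.
Open Scope R_scope.

Record Cplx := mkC { Cre : R; Cim : R }.
Definition C0 : Cplx := mkC 0 0.
Definition C1 : Cplx := mkC 1 0.
Definition Cadd (x y : Cplx) : Cplx := mkC (Cre x + Cre y) (Cim x + Cim y).
Definition Cmul (x y : Cplx) : Cplx :=
  mkC (Cre x * Cre y - Cim x * Cim y) (Cre x * Cim y + Cim x * Cre y).
Definition Cconj (x : Cplx) : Cplx := mkC (Cre x) (- Cim x).
Definition CofR (r : R) : Cplx := mkC r 0.
Definition Cnorm2 (x : Cplx) : R := Cre x * Cre x + Cim x * Cim x.
Definition Cabs (x : Cplx) : R := sqrt (Cnorm2 x).

Fixpoint Csum (n : nat) (f : nat -> Cplx) : Cplx :=
  match n with O => C0 | S m => Cadd (Csum m f) (f m) end.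
Fixpoint Rsum (n : nat) (f : nat -> R) : R :=
  match n with O => 0 | S m => Rsum m f + f m end.

Definition Cmul3 (x y z : Cplx) : Cplx := Cmul (Cmul x y) z.

(* A d x d complex matrix, entries M i i' for i, i' < d (other values ignored). *)
Definition Mat := nat -> nat -> Cplx.
(* A vector of (C^d)^{(x)3}, entries v i j k for i, j, k < d. *)
Definition Vec3 := nat -> nat -> nat -> Cplx.
(* A tensor T = (T_{i i' j j' k k'}) in (C^n)^{(x)6}. *)
Definition Tens6 := nat -> nat -> nat -> nat -> nat -> nat -> Cplx.

Definition delta (i j : nat) : Cplx := if Nat.eqb i j then C1 else C0.

Definition is_hermitian_mat (d : nat) (M : Mat) : Prop :=
  forall i i', (i < d)%nat -> (i' < d)%nat -> M i i' = Cconj (M i' i).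

Definition squares_to_id (d : nat) (M : Mat) : Prop :=
  forall i i', (i < d)%nat -> (i' < d)%nat ->
    Csum d (fun m => Cmul (M i m) (M m i')) = delta i i'.

Definition hs_inner (d : nat) (M N : Mat) : Cplx :=
  Csum d (fun i => Csum d (fun i' => Cmul (Cconj (M i i')) (N i i'))).

Definition mat_norm (d : nat) (M : Mat) : R :=
  sqrt (Rsum d (fun i => Rsum d (fun i' => Cnorm2 (M i i')))).

Definition vec3_norm (d : nat) (v : Vec3) : R :=
  sqrt (Rsum d (fun i => Rsum d (fun j => Rsum d (fun k => Cnorm2 (v i j k))))).

(** T Hermitian as an operator on C^{n^3}, rows (i,j,k), columns (i',j',k') *)
Definition tensor_hermitian (n : nat) (T : Tens6) : Prop :=
  forall i i' j j' k k', (i < n)%nat -> (i' < n)%nat -> (j < n)%nat ->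
    (j' < n)%nat -> (k < n)%nat -> (k' < n)%nat ->
    T i i' j j' k k' = Cconj (T i' i j' j k' k).

Definition tensor_nonzero (n : nat) (T : Tens6) : Prop :=
  exists i i' j j' k k', (i < n)%nat /\ (i' < n)%nat /\ (j < n)%nat /\
    (j' < n)%nat /\ (k < n)%nat /\ (k' < n)%nat /\ T i i' j j' k k' <> C0.

Definition spans_Mn (n : nat) (P : nat -> Mat) : Prop :=
  forall M : Mat, exists c : nat -> Cplx,
    forall i i', (i < n)%nat -> (i' < n)%nat ->
      M i i' = Csum (n * n) (fun a => Cmul (c a) (P a i i')).

Definition lin_indep_Mn (n : nat) (P : nat -> Mat) : Prop :=
  forall c : nat -> Cplx,
    (forall i i', (i < n)%nat -> (i' < n)%nat ->
       Csum (n * n) (fun a => Cmul (c a) (P a i i')) = C0) ->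
    forall a, (a < n * n)%nat -> c a = C0.

Definition good_basis (n : nat) (P : nat -> Mat) : Prop :=
  spans_Mn n P /\ lin_indep_Mn n P /\
  (forall a b, (a < n * n)%nat -> (b < n * n)%nat -> a <> b ->
     hs_inner n (P a) (P b) = C0) /\
  (forall a, (a < n * n)%nat -> is_hermitian_mat n (P a)) /\
  (forall a, (a < n * n)%nat -> squares_to_id n (P a)).

Definition tens_apply (n : nat) (T : Tens6) (x : Vec3) : Vec3 :=
  fun i j k => Csum n (fun i' => Csum n (fun j' => Csum n (fun k' =>
    Cmul (T i i' j j' k k') (x i' j' k')))).

(* the set whose supremum is ||T||_{2,eps} (operator norm on C^{n^3}) *)
Definition norm2eps_set (n : nat) (T : Tens6) (r : R) : Prop :=
  exists x : Vec3, vec3_norm n x <= 1 /\ r = vec3_norm n (tens_apply n T x).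

(* the set whose supremum is ||T||_{3,eps} *)
Definition trilinear (n : nat) (T : Tens6) (U V W : Mat) : Cplx :=
  Csum n (fun i => Csum n (fun i' => Csum n (fun j => Csum n (fun j' =>
  Csum n (fun k => Csum n (fun k' =>
    Cmul (T i i' j j' k k') (Cmul3 (U i i') (V j j') (W k k')))))))).

Definition norm3eps_set (n : nat) (T : Tens6) (r : R) : Prop :=
  exists U V W : Mat, mat_norm n U <= 1 /\ mat_norm n V <= 1 /\
    mat_norm n W <= 1 /\ r = Cabs (trilinear n T U V W).

Definition classical_value_set (N : nat) (pi s : nat -> nat -> nat -> R)
  (r : R) : Prop :=
  exists a b c : nat -> R,
    (forall x, (x < N)%nat -> a x = 1 \/ a x = -1) /\
    (forall y, (y < N)%nat -> b y = 1 \/ b y = -1) /\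
    (forall z, (z < N)%nat -> c z = 1 \/ c z = -1) /\
    r = Rabs (Rsum N (fun x => Rsum N (fun y => Rsum N (fun z =>
          pi x y z * s x y z * a x * b y * c z)))).

Definition expect3 (d : nat) (psi : Vec3) (A B C : Mat) : Cplx :=
  Csum d (fun a => Csum d (fun b => Csum d (fun c =>
  Csum d (fun a' => Csum d (fun b' => Csum d (fun c' =>
    Cmul (Cconj (psi a b c))
      (Cmul (Cmul3 (A a a') (B b b') (C c c')) (psi a' b' c')))))))).

Definition is_observable (d : nat) (M : Mat) : Prop :=
  is_hermitian_mat d M /\ squares_to_id d M.

Definition entangled_value_set (N : nat) (pi s : nat -> nat -> nat -> R)
  (r : R) : Prop :=
  exists (d : nat) (psi : Vec3) (A B C : nat -> Mat),
    vec3_norm d psi = 1 /\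
    (forall x, (x < N)%nat -> is_observable d (A x)) /\
    (forall y, (y < N)%nat -> is_observable d (B y)) /\
    (forall z, (z < N)%nat -> is_observable d (C z)) /\
    r = Cabs (Csum N (fun x => Csum N (fun y => Csum N (fun z =>
          Cmul (CofR (pi x y z * s x y z)) (expect3 d psi (A x) (B y) (C z)))))).

Definition Gcoef (n : nat) (T : Tens6) (P : nat -> Mat) (p q r : nat) : Cplx :=
  Csum n (fun i => Csum n (fun i' => Csum n (fun j => Csum n (fun j' =>
  Csum n (fun k => Csum n (fun k' =>
    Cmul (T i i' j j' k k')
      (Cconj (Cmul3 (P p i i') (P q j j') (P r k k'))))))))).

Definition Zsum (n : nat) (T : Tens6) (P : nat -> Mat) : R :=
  Rsum (n * n) (fun p => Rsum (n * n) (fun q => Rsum (n * n) (fun r =>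
    Cabs (Gcoef n T P p q r)))).

Definition game_pi (n : nat) (T : Tens6) (P : nat -> Mat) (p q r : nat) : R :=
  Cabs (Gcoef n T P p q r) / Zsum n T P.

(* sign of G_{P,Q,R} (G_{P,Q,R} is real; its real part carries the sign) *)
Definition game_sign (n : nat) (T : Tens6) (P : nat -> Mat) (p q r : nat) : R :=
  if Rle_dec 0 (Cre (Gcoef n T P p q r)) then 1 else -1.

(* Write G_{P,Q,R} = <P (x) Q (x) R, T> for the Hilbert-Schmidt pairing. The P are orthogonal
   with <P, P> = tr P^2 = n, so the products P (x) Q (x) R form an orthogonal basis of M_n^(x)3
   and sum_{P,Q,R} G_{P,Q,R} P (x) Q (x) R = n^3 T.
   Entangled bound: if the players measure the observables P, Q, R themselves on a unit state psi,
   this identity makes the bias n^3 |<psi, T psi>| / Z; for Hermitian T the supremum of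
   |<psi, T psi>| over unit psi is the operator norm ||T||_{2,eps} (polarization and the
   parallelogram law).
   Classical bound: signs a, b, c give bias |T(U_a, U_b, U_c)| / Z with U_a = sum_P a_P conj(P),
   and orthogonality gives ||U_a||^2 = n^2 * n; hence the bias is at most n^{9/2} ||T||_{3,eps} / Z.
   The third inequality is the quotient of the first two. *)

From Stdlib Require Import Reals Lra Lia FunctionalExtensionality.
Open Scope R_scope.

Definition Copp (x : Cplx) : Cplx := mkC (- Cre x) (- Cim x).

Definition Csub (x y : Cplx) : Cplx := Cadd x (Copp y).

Lemma Cplx_eq (x y : Cplx) : Cre x = Cre y -> Cim x = Cim y -> x = y.
Proof. destruct x, y; simpl; intros -> ->; reflexivity. Qed.

Lemma Cplx_ring : ring_theory C0 C1 Cadd Cmul Csub Copp (@eq Cplx).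
Proof.
  constructor; intros; apply Cplx_eq; destruct x; try destruct y; try destruct z;
    simpl; ring.
Qed.

Add Ring Cplx_ring : Cplx_ring.

Lemma Cconj_add x y : Cconj (Cadd x y) = Cadd (Cconj x) (Cconj y).
Proof. apply Cplx_eq; simpl; ring. Qed.

Lemma Cconj_sub x y : Cconj (Csub x y) = Csub (Cconj x) (Cconj y).
Proof. apply Cplx_eq; simpl; ring. Qed.

Lemma Cconj_mul x y : Cconj (Cmul x y) = Cmul (Cconj x) (Cconj y).
Proof. apply Cplx_eq; simpl; ring. Qed.

Lemma Cconj_involutive x : Cconj (Cconj x) = x.
Proof. apply Cplx_eq; simpl; ring. Qed.

Lemma Cconj_CofR r : Cconj (CofR r) = CofR r.
Proof. apply Cplx_eq; simpl; ring. Qed.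

Lemma CofR_mul r s : CofR (r * s) = Cmul (CofR r) (CofR s).
Proof. apply Cplx_eq; simpl; ring. Qed.

Lemma Cre_CofR_mul r x : Cre (Cmul (CofR r) x) = r * Cre x.
Proof. simpl; ring. Qed.

Lemma Cnorm2_ge0 x : 0 <= Cnorm2 x.
Proof. unfold Cnorm2; nra. Qed.

Lemma Cnorm2_CofR_mul r x : Cnorm2 (Cmul (CofR r) x) = r * r * Cnorm2 x.
Proof. unfold Cnorm2; simpl; ring. Qed.

Lemma Cnorm2_Cre_conj x : Cnorm2 x = Cre (Cmul (Cconj x) x).
Proof. unfold Cnorm2; simpl; ring. Qed.

Lemma Cabs_ge0 x : 0 <= Cabs x.
Proof. apply sqrt_pos. Qed.

Lemma Cabs_CofR_mul r x : Cabs (Cmul (CofR r) x) = Rabs r * Cabs x.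
Proof.
  unfold Cabs; rewrite Cnorm2_CofR_mul, sqrt_mult, <- sqrt_Rsqr_abs by
    (apply Rle_0_sqr || apply Cnorm2_ge0); reflexivity.
Qed.

Lemma Rabs_Cre_le_Cabs x : Rabs (Cre x) <= Cabs x.
Proof.
  unfold Cabs, Cnorm2; rewrite <- sqrt_Rsqr_abs; apply sqrt_le_1_alt; unfold Rsqr; nra.
Qed.

Lemma delta_eq i : delta i i = C1.
Proof. unfold delta; rewrite Nat.eqb_refl; reflexivity. Qed.

Lemma delta_neq i j : i <> j -> delta i j = C0.
Proof. intros H; unfold delta; destruct (Nat.eqb_spec i j); congruence. Qed.

Lemma Csum_ext n f g : (forall i, (i < n)%nat -> f i = g i) -> Csum n f = Csum n g.
Proof. induction n; simpl; intros H; f_equal; auto. Qed.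

Lemma Csum_add n f g : Csum n (fun i => Cadd (f i) (g i)) = Cadd (Csum n f) (Csum n g).
Proof. induction n; simpl; [ring | rewrite IHn; ring]. Qed.

Lemma Csum_sub n f g : Csum n (fun i => Csub (f i) (g i)) = Csub (Csum n f) (Csum n g).
Proof. induction n; simpl; [ring | rewrite IHn; ring]. Qed.

Lemma Csum_mul_l n c f : Cmul c (Csum n f) = Csum n (fun i => Cmul c (f i)).
Proof. induction n; simpl; [ring | rewrite <- IHn; ring]. Qed.

Lemma Csum_mul_r n c f : Cmul (Csum n f) c = Csum n (fun i => Cmul (f i) c).
Proof. induction n; simpl; [ring | rewrite <- IHn; ring]. Qed.

Lemma Csum_mul3 N f g h : Cmul3 (Csum N f) (Csum N g) (Csum N h) =
  Csum N (fun p => Csum N (fun q => Csum N (fun r => Cmul3 (f p) (g q) (h r)))).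
Proof.
  unfold Cmul3; rewrite !Csum_mul_r; apply Csum_ext; intros p _.
  rewrite (Csum_mul_l N (f p)), Csum_mul_r; apply Csum_ext; intros q _.
  rewrite Csum_mul_l; reflexivity.
Qed.

Lemma Csum_conj n f : Cconj (Csum n f) = Csum n (fun i => Cconj (f i)).
Proof.
  induction n; simpl; [apply Cplx_eq; simpl; ring | rewrite Cconj_add, IHn; reflexivity].
Qed.

Lemma Csum_CofR n r : Csum n (fun _ => CofR r) = CofR (INR n * r).
Proof.
  induction n; simpl Csum; [|rewrite IHn, S_INR]; apply Cplx_eq; simpl; ring.
Qed.

Lemma Cre_Csum n f : Cre (Csum n f) = Rsum n (fun i => Cre (f i)).
Proof. induction n; simpl; [reflexivity | rewrite IHn; reflexivity]. Qed.

Lemma Csum_zero n f : (forall i, (i < n)%nat -> f i = C0) -> Csum n f = C0.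
Proof.
  intros H; rewrite (Csum_ext n f (fun _ => C0) H); clear H.
  induction n; simpl; [|rewrite IHn]; ring.
Qed.

Lemma Csum_single n f b : (b < n)%nat ->
  (forall i, (i < n)%nat -> i <> b -> f i = C0) -> Csum n f = f b.
Proof.
  induction n; intros Hb H; simpl; [lia|].
  destruct (Nat.eq_dec b n) as [->|Hne].
  - rewrite Csum_zero by (intros; apply H; lia); ring.
  - rewrite IHn, (H n) by (lia || intros; apply H; lia); ring.
Qed.

Lemma Csum_swap n m (f : nat -> nat -> Cplx) :
  Csum n (fun i => Csum m (fun j => f i j)) = Csum m (fun j => Csum n (fun i => f i j)).
Proof.
  induction n; simpl.
  - induction m; simpl; [reflexivity | rewrite <- IHm; ring].
  - rewrite IHn, <- Csum_add; reflexivity.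
Qed.

Lemma Csum_swap12 N n m (f : nat -> nat -> nat -> Cplx) :
  Csum N (fun p => Csum n (fun i => Csum m (fun j => f p i j))) =
  Csum n (fun i => Csum m (fun j => Csum N (fun p => f p i j))).
Proof. rewrite Csum_swap; apply Csum_ext; intros; apply Csum_swap. Qed.

Lemma Csum_swap13 N n1 n2 n3 (f : nat -> nat -> nat -> nat -> Cplx) :
  Csum N (fun p => Csum n1 (fun a => Csum n2 (fun b => Csum n3 (fun c => f p a b c)))) =
  Csum n1 (fun a => Csum n2 (fun b => Csum n3 (fun c => Csum N (fun p => f p a b c)))).
Proof. rewrite Csum_swap12; do 2 (apply Csum_ext; intros); apply Csum_swap. Qed.

Lemma Csum_swap16 N n (f : nat -> nat -> nat -> nat -> nat -> nat -> nat -> Cplx) :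
  Csum N (fun p => Csum n (fun a => Csum n (fun b => Csum n (fun c =>
    Csum n (fun d => Csum n (fun e => Csum n (fun g => f p a b c d e g))))))) =
  Csum n (fun a => Csum n (fun b => Csum n (fun c =>
    Csum n (fun d => Csum n (fun e => Csum n (fun g => Csum N (fun p => f p a b c d e g))))))).
Proof. rewrite Csum_swap13; do 3 (apply Csum_ext; intros); apply Csum_swap13. Qed.

Lemma Csum_swap22 n1 n2 n3 n4 (f : nat -> nat -> nat -> nat -> Cplx) :
  Csum n1 (fun q => Csum n2 (fun r => Csum n3 (fun i => Csum n4 (fun i' => f q r i i')))) =
  Csum n3 (fun i => Csum n4 (fun i' => Csum n1 (fun q => Csum n2 (fun r => f q r i i')))).
Proof.
  transitivity (Csum n1 (fun q => Csum n3 (fun i => Csum n4 (fun i' =>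
    Csum n2 (fun r => f q r i i'))))).
  { apply Csum_ext; intros; apply Csum_swap12. }
  apply Csum_swap12.
Qed.

Lemma Csum_swap33 n (f : nat -> nat -> nat -> nat -> nat -> nat -> Cplx) :
  Csum n (fun i => Csum n (fun j => Csum n (fun k =>
    Csum n (fun a => Csum n (fun b => Csum n (fun c => f i j k a b c)))))) =
  Csum n (fun a => Csum n (fun b => Csum n (fun c =>
    Csum n (fun i => Csum n (fun j => Csum n (fun k => f i j k a b c)))))).
Proof.
  transitivity (Csum n (fun i => Csum n (fun j => Csum n (fun a => Csum n (fun b =>
    Csum n (fun c => Csum n (fun k => f i j k a b c))))))).
  { do 2 (apply Csum_ext; intros); apply Csum_swap13. }
  transitivity (Csum n (fun i => Csum n (fun a => Csum n (fun b => Csum n (fun c =>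
    Csum n (fun j => Csum n (fun k => f i j k a b c))))))).
  { apply Csum_ext; intros; apply Csum_swap13. }
  apply Csum_swap13.
Qed.

Lemma Csum_swap36 N n (f : nat -> nat -> nat -> nat -> nat -> nat -> nat -> nat -> nat -> Cplx) :
  Csum N (fun p => Csum N (fun q => Csum N (fun r =>
    Csum n (fun a => Csum n (fun b => Csum n (fun c =>
    Csum n (fun d => Csum n (fun e => Csum n (fun g => f p q r a b c d e g))))))))) =
  Csum n (fun a => Csum n (fun b => Csum n (fun c =>
    Csum n (fun d => Csum n (fun e => Csum n (fun g =>
    Csum N (fun p => Csum N (fun q => Csum N (fun r => f p q r a b c d e g))))))))).
Proof.
  transitivity (Csum N (fun p => Csum N (fun q => Csum n (fun a => Csum n (fun b =>
    Csum n (fun c => Csum n (fun d => Csum n (fun e => Csum n (fun g =>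
    Csum N (fun r => f p q r a b c d e g)))))))))).
  { do 2 (apply Csum_ext; intros); apply Csum_swap16. }
  transitivity (Csum N (fun p => Csum n (fun a => Csum n (fun b =>
    Csum n (fun c => Csum n (fun d => Csum n (fun e => Csum n (fun g =>
    Csum N (fun q => Csum N (fun r => f p q r a b c d e g)))))))))).
  { apply Csum_ext; intros; apply Csum_swap16. }
  apply Csum_swap16.
Qed.

Lemma Rsum_ext n f g : (forall i, (i < n)%nat -> f i = g i) -> Rsum n f = Rsum n g.
Proof. induction n; simpl; intros H; f_equal; auto. Qed.

Lemma Rsum_add n f g : Rsum n (fun i => f i + g i) = Rsum n f + Rsum n g.
Proof. induction n; simpl; [ring | rewrite IHn; ring]. Qed.

Lemma Rsum_scal n c f : Rsum n (fun i => c * f i) = c * Rsum n f.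
Proof. induction n; simpl; [ring | rewrite IHn; ring]. Qed.

Lemma Rsum_ge0 n f : (forall i, (i < n)%nat -> 0 <= f i) -> 0 <= Rsum n f.
Proof.
  induction n; simpl; intros H; [lra|].
  pose proof (H n ltac:(lia)); pose proof (IHn ltac:(intros; apply H; lia)); lra.
Qed.

Lemma Rsum_eq0 n f : (forall i, (i < n)%nat -> 0 <= f i) -> Rsum n f = 0 ->
  forall i, (i < n)%nat -> f i = 0.
Proof.
  induction n; simpl; intros H Hs i Hi; [lia|].
  pose proof (H n ltac:(lia)); pose proof (Rsum_ge0 n f ltac:(intros; apply H; lia)).
  destruct (Nat.eq_dec i n); [subst; lra|].
  apply IHn; [intros; apply H; lia | lra | lia].
Qed.

(** * Expansion in the basis [P] *)

Lemma hs_inner_hermitian_involution n M :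
  is_hermitian_mat n M -> squares_to_id n M -> hs_inner n M M = CofR (INR n).
Proof.
  intros Hh Hsq; unfold hs_inner.
  transitivity (Csum n (fun i => Csum n (fun i' => Cmul (M i' i) (M i i')))).
  { apply Csum_ext; intros i Hi; apply Csum_ext; intros i' Hi'.
    rewrite (Hh i i'), Cconj_involutive by auto.
    reflexivity. }
  rewrite Csum_swap, <- (Rmult_1_r (INR n)), <- Csum_CofR.
  apply Csum_ext; intros i Hi; rewrite (Hsq i i), delta_eq by auto; reflexivity.
Qed.

Lemma Gcoef_nested n T P p q r : Gcoef n T P p q r =
  hs_inner n (P p) (fun i i' => hs_inner n (P q) (fun j j' =>
    hs_inner n (P r) (fun k k' => T i i' j j' k k'))).
Proof.
  unfold Gcoef, hs_inner.
  repeat (apply Csum_ext; intros; rewrite ?Csum_mul_l).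
  unfold Cmul3; rewrite !Cconj_mul; ring.
Qed.

Section GoodBasis.

Variables (n : nat) (P : nat -> Mat).

Hypothesis HP : good_basis n P.

Lemma good_basis_hs_inner_coord (c : nat -> Cplx) M b : (b < n * n)%nat ->
  (forall i i', (i < n)%nat -> (i' < n)%nat ->
     M i i' = Csum (n * n) (fun a => Cmul (c a) (P a i i'))) ->
  hs_inner n (P b) M = Cmul (c b) (CofR (INR n)).
Proof.
  destruct HP as (_ & _ & Horth & Hherm & Hsq); intros Hb HM; unfold hs_inner.
  transitivity (Csum (n * n) (fun a => Cmul (c a) (hs_inner n (P b) (P a)))).
  { transitivity (Csum n (fun i => Csum n (fun i' => Csum (n * n) (fun a =>
      Cmul (c a) (Cmul (Cconj (P b i i')) (P a i i')))))).
    { apply Csum_ext; intros i Hi; apply Csum_ext; intros i' Hi'.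
      rewrite HM, Csum_mul_l by auto; apply Csum_ext; intros; ring. }
    rewrite <- Csum_swap12; apply Csum_ext; intros; unfold hs_inner.
    rewrite Csum_mul_l; apply Csum_ext; intros; rewrite Csum_mul_l; reflexivity. }
  rewrite (Csum_single _ _ b Hb).
  - rewrite hs_inner_hermitian_involution by auto; reflexivity.
  - intros a Ha Hab; rewrite Horth by auto; ring.
Qed.

Lemma good_basis_expand M a a' : (a < n)%nat -> (a' < n)%nat ->
  Csum (n * n) (fun p => Cmul (hs_inner n (P p) M) (P p a a')) =
  Cmul (CofR (INR n)) (M a a').
Proof.
  intros Ha Ha'; destruct (proj1 HP M) as [c Hc].
  rewrite Hc, Csum_mul_l by auto; apply Csum_ext; intros p Hp.
  rewrite (good_basis_hs_inner_coord c M p Hp Hc); ring.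
Qed.

Lemma good_basis_expand3 T a a' b b' c c' :
  (a < n)%nat -> (a' < n)%nat -> (b < n)%nat -> (b' < n)%nat -> (c < n)%nat -> (c' < n)%nat ->
  Csum (n * n) (fun p => Csum (n * n) (fun q => Csum (n * n) (fun r =>
    Cmul (Gcoef n T P p q r) (Cmul3 (P p a a') (P q b b') (P r c c'))))) =
  Cmul (CofR (INR n ^ 3)) (T a a' b b' c c').
Proof.
  intros Ha Ha' Hb Hb' Hc Hc'; rewrite Csum_swap12.
  transitivity (Csum (n * n) (fun q => Csum (n * n) (fun r => Cmul (CofR (INR n))
    (Cmul (Cmul (hs_inner n (P q) (fun j j' => hs_inner n (P r) (fun k k' => T a a' j j' k k')))
       (P q b b')) (P r c c'))))).
  { apply Csum_ext; intros q Hq; apply Csum_ext; intros r Hr.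
    set (F := fun i i' => hs_inner n (P q) (fun j j' =>
      hs_inner n (P r) (fun k k' => T i i' j j' k k'))).
    transitivity (Cmul (Csum (n * n) (fun p => Cmul (hs_inner n (P p) F) (P p a a')))
      (Cmul (P q b b') (P r c c'))).
    { rewrite Csum_mul_r; apply Csum_ext; intros; rewrite Gcoef_nested; unfold F, Cmul3; ring. }
    rewrite good_basis_expand by auto; unfold F; ring. }
  rewrite Csum_swap.
  transitivity (Csum (n * n) (fun r => Cmul (CofR (INR n * INR n))
    (Cmul (hs_inner n (P r) (fun k k' => T a a' b b' k k')) (P r c c')))).
  { apply Csum_ext; intros r Hr.
    set (F := fun j j' => hs_inner n (P r) (fun k k' => T a a' j j' k k')).
    transitivity (Cmul (CofR (INR n)) (Cmul (Csum (n * n) (fun q =>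
      Cmul (hs_inner n (P q) F) (P q b b'))) (P r c c'))).
    { rewrite Csum_mul_r, Csum_mul_l; apply Csum_ext; intros; ring. }
    rewrite good_basis_expand, CofR_mul by auto; unfold F; ring. }
  rewrite <- Csum_mul_l, good_basis_expand by auto.
  replace (INR n ^ 3) with (INR n * INR n * INR n) by ring; rewrite !CofR_mul; ring.
Qed.

End GoodBasis.

Definition vadd (x y : Vec3) : Vec3 := fun i j k => Cadd (x i j k) (y i j k).

Definition vsub (x y : Vec3) : Vec3 := fun i j k => Csub (x i j k) (y i j k).

Definition vscal (c : R) (x : Vec3) : Vec3 := fun i j k => Cmul (CofR c) (x i j k).

Definition vec3_inner (d : nat) (y x : Vec3) : Cplx :=
  Csum d (fun i => Csum d (fun j => Csum d (fun k => Cmul (Cconj (y i j k)) (x i j k)))).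

Definition vec3_norm2 (d : nat) (x : Vec3) : R :=
  Rsum d (fun i => Rsum d (fun j => Rsum d (fun k => Cnorm2 (x i j k)))).

Definition tens_form (n : nat) (T : Tens6) (y x : Vec3) : Cplx :=
  vec3_inner n y (tens_apply n T x).

Lemma vec3_norm_sqrt d x : vec3_norm d x = sqrt (vec3_norm2 d x).
Proof. reflexivity. Qed.

Lemma vec3_norm2_inner d x : vec3_norm2 d x = Cre (vec3_inner d x x).
Proof.
  unfold vec3_norm2, vec3_inner; rewrite !Cre_Csum.
  repeat (apply Rsum_ext; intros; rewrite ?Cre_Csum); apply Cnorm2_Cre_conj.
Qed.

Lemma vec3_norm2_ge0 d x : 0 <= vec3_norm2 d x.
Proof. repeat (apply Rsum_ge0; intros); apply Cnorm2_ge0. Qed.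

Lemma vec3_norm2_scal d c x : vec3_norm2 d (vscal c x) = c * c * vec3_norm2 d x.
Proof.
  unfold vec3_norm2; rewrite <- !Rsum_scal.
  repeat (apply Rsum_ext; intros; rewrite <- ?Rsum_scal); apply Cnorm2_CofR_mul.
Qed.

Lemma vec3_norm2_parallelogram d x y :
  vec3_norm2 d (vadd x y) + vec3_norm2 d (vsub x y) = 2 * vec3_norm2 d x + 2 * vec3_norm2 d y.
Proof.
  unfold vec3_norm2; rewrite <- !Rsum_scal, <- !Rsum_add.
  repeat (apply Rsum_ext; intros; rewrite <- ?Rsum_scal, <- ?Rsum_add).
  unfold vadd, vsub, Cnorm2; simpl; ring.
Qed.

Lemma vec3_norm2_eq0 d x : vec3_norm2 d x = 0 ->
  forall i j k, (i < d)%nat -> (j < d)%nat -> (k < d)%nat -> x i j k = C0.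
Proof.
  intros H i j k Hi Hj Hk.
  assert (Hij : Rsum d (fun k => Cnorm2 (x i j k)) = 0).
  { refine (Rsum_eq0 _ _ _ (Rsum_eq0 _ _ _ H i Hi) j Hj);
      intros; repeat (apply Rsum_ge0; intros); apply Cnorm2_ge0. }
  pose proof (Rsum_eq0 _ _ (fun k _ => Cnorm2_ge0 (x i j k)) Hij k Hk) as Hx.
  unfold Cnorm2 in Hx; apply Cplx_eq; simpl; nra.
Qed.

Lemma vec3_inner_add_l d x y z :
  vec3_inner d (vadd x y) z = Cadd (vec3_inner d x z) (vec3_inner d y z).
Proof.
  unfold vec3_inner; repeat (rewrite <- Csum_add; apply Csum_ext; intros).
  unfold vadd; rewrite Cconj_add; ring.
Qed.

Lemma vec3_inner_add_r d x y z :
  vec3_inner d x (vadd y z) = Cadd (vec3_inner d x y) (vec3_inner d x z).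
Proof.
  unfold vec3_inner; repeat (rewrite <- Csum_add; apply Csum_ext; intros); unfold vadd; ring.
Qed.

Lemma vec3_inner_sub_l d x y z :
  vec3_inner d (vsub x y) z = Csub (vec3_inner d x z) (vec3_inner d y z).
Proof.
  unfold vec3_inner; repeat (rewrite <- Csum_sub; apply Csum_ext; intros).
  unfold vsub; rewrite Cconj_sub; ring.
Qed.

Lemma vec3_inner_sub_r d x y z :
  vec3_inner d x (vsub y z) = Csub (vec3_inner d x y) (vec3_inner d x z).
Proof.
  unfold vec3_inner; repeat (rewrite <- Csum_sub; apply Csum_ext; intros); unfold vsub; ring.
Qed.

Lemma vec3_inner_scal_l d c x y : vec3_inner d (vscal c x) y = Cmul (CofR c) (vec3_inner d x y).
Proof.
  unfold vec3_inner; repeat (rewrite Csum_mul_l; apply Csum_ext; intros).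
  unfold vscal; rewrite Cconj_mul, Cconj_CofR; ring.
Qed.

Lemma vec3_inner_scal_r d c x y : vec3_inner d x (vscal c y) = Cmul (CofR c) (vec3_inner d x y).
Proof.
  unfold vec3_inner; repeat (rewrite Csum_mul_l; apply Csum_ext; intros); unfold vscal; ring.
Qed.

Lemma vec3_inner_norm2_eq0 d y x : vec3_norm2 d y = 0 -> vec3_inner d y x = C0.
Proof.
  intros H; unfold vec3_inner; repeat (apply Csum_zero; intros).
  rewrite (vec3_norm2_eq0 d y H) by auto; apply Cplx_eq; simpl; ring.
Qed.

Lemma tens_apply_add n T x y :
  tens_apply n T (vadd x y) = vadd (tens_apply n T x) (tens_apply n T y).
Proof.
  do 3 (apply functional_extensionality; intros); unfold tens_apply, vadd.
  repeat (rewrite <- Csum_add; apply Csum_ext; intros); ring.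
Qed.

Lemma tens_apply_sub n T x y :
  tens_apply n T (vsub x y) = vsub (tens_apply n T x) (tens_apply n T y).
Proof.
  do 3 (apply functional_extensionality; intros); unfold tens_apply, vsub.
  repeat (rewrite <- Csum_sub; apply Csum_ext; intros); ring.
Qed.

Lemma tens_apply_scal n T c x : tens_apply n T (vscal c x) = vscal c (tens_apply n T x).
Proof.
  do 3 (apply functional_extensionality; intros); unfold tens_apply, vscal.
  repeat (rewrite Csum_mul_l; apply Csum_ext; intros); ring.
Qed.

Lemma tens_form_expand n T y x : tens_form n T y x =
  Csum n (fun i => Csum n (fun j => Csum n (fun k =>
  Csum n (fun a => Csum n (fun b => Csum n (fun c =>
    Cmul (Cconj (y i j k)) (Cmul (T i a j b k c) (x a b c)))))))).
Proof.
  unfold tens_form, vec3_inner, tens_apply.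
  do 3 (apply Csum_ext; intros); rewrite Csum_mul_l.
  do 2 (apply Csum_ext; intros; rewrite Csum_mul_l); reflexivity.
Qed.

Lemma tens_form_hermitian n T x y :
  tensor_hermitian n T -> tens_form n T x y = Cconj (tens_form n T y x).
Proof.
  intros HT; rewrite !tens_form_expand, Csum_swap33.
  rewrite Csum_conj; apply Csum_ext; intros i Hi; rewrite Csum_conj; apply Csum_ext; intros j Hj.
  rewrite Csum_conj; apply Csum_ext; intros k Hk; rewrite Csum_conj; apply Csum_ext; intros a Ha.
  rewrite Csum_conj; apply Csum_ext; intros b Hb; rewrite Csum_conj; apply Csum_ext; intros c Hc.
  rewrite (HT i a j b k c) by auto; rewrite !Cconj_mul, !Cconj_involutive; ring.
Qed.

Lemma tens_form_polarization n T x y : tensor_hermitian n T ->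
  Cre (tens_form n T (vadd x y) (vadd x y)) - Cre (tens_form n T (vsub x y) (vsub x y)) =
  4 * Cre (tens_form n T y x).
Proof.
  intros HT; unfold tens_form.
  rewrite tens_apply_add, tens_apply_sub, vec3_inner_add_l, !vec3_inner_add_r,
    vec3_inner_sub_l, !vec3_inner_sub_r.
  fold (tens_form n T x x) (tens_form n T x y) (tens_form n T y x) (tens_form n T y y).
  rewrite (tens_form_hermitian n T x y HT).
  destruct (tens_form n T y x), (tens_form n T x x), (tens_form n T y y); simpl; ring.
Qed.

Lemma tens_form_scal n T c z :
  tens_form n T (vscal c z) (vscal c z) = Cmul (CofR (c * c)) (tens_form n T z z).
Proof.
  unfold tens_form; rewrite tens_apply_scal, vec3_inner_scal_l, vec3_inner_scal_r, CofR_mul.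
  ring.
Qed.

Lemma tens_form_bound_of_unit n T K :
  (forall w, vec3_norm n w = 1 -> Cabs (tens_form n T w w) <= K) ->
  forall z, Rabs (Cre (tens_form n T z z)) <= K * vec3_norm2 n z.
Proof.
  intros Hunit z; pose proof (vec3_norm2_ge0 n z) as Hz.
  destruct (Req_dec (vec3_norm2 n z) 0) as [H0|H0].
  { unfold tens_form; rewrite vec3_inner_norm2_eq0, H0 by auto; simpl.
    rewrite Rabs_R0; lra. }
  set (s := sqrt (vec3_norm2 n z)).
  assert (Hs : 0 < s) by (apply sqrt_lt_R0; lra).
  assert (Hss : s * s = vec3_norm2 n z) by (apply sqrt_sqrt; lra).
  assert (Hw : vec3_norm n (vscal (/ s) z) = 1).
  { rewrite vec3_norm_sqrt, vec3_norm2_scal, <- Hss.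
    replace (/ s * / s * (s * s)) with 1 by (field; lra); apply sqrt_1. }
  pose proof (Hunit _ Hw) as Hle.
  rewrite tens_form_scal, Cabs_CofR_mul, Rabs_right in Hle
    by (apply Rle_ge, Rmult_le_pos; left; apply Rinv_0_lt_compat; lra).
  pose proof (Rabs_Cre_le_Cabs (tens_form n T z z)).
  rewrite <- Hss.
  apply Rle_trans with (Cabs (tens_form n T z z)); [assumption|].
  replace (Cabs (tens_form n T z z)) with (s * s * (/ s * / s * Cabs (tens_form n T z z)))
    by (field; lra).
  rewrite (Rmult_comm K); apply Rmult_le_compat_l; nra.
Qed.

(* Polarization with y = T x / |T x| and the parallelogram law. *)
Lemma hermitian_apply_norm_le n T K :
  tensor_hermitian n T -> 0 <= K ->
  (forall z, Rabs (Cre (tens_form n T z z)) <= K * vec3_norm2 n z) ->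
  forall x, vec3_norm n x <= 1 -> vec3_norm n (tens_apply n T x) <= K.
Proof.
  intros HT HK Hform x Hx.
  set (v := tens_apply n T x).
  pose proof (vec3_norm2_ge0 n v) as Hv.
  rewrite vec3_norm_sqrt.
  destruct (Req_dec (vec3_norm2 n v) 0) as [H0|H0]; [rewrite H0, sqrt_0; assumption|].
  set (h := sqrt (vec3_norm2 n v)).
  assert (Hh : 0 < h) by (apply sqrt_lt_R0; lra).
  assert (Hhh : h * h = vec3_norm2 n v) by (apply sqrt_sqrt; lra).
  set (y := vscal (/ h) v).
  assert (Hy : vec3_norm2 n y = 1) by (unfold y; rewrite vec3_norm2_scal, <- Hhh; field; lra).
  assert (Hxx : vec3_norm2 n x <= 1).
  { rewrite vec3_norm_sqrt in Hx; pose proof (vec3_norm2_ge0 n x).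
    rewrite <- (sqrt_sqrt (vec3_norm2 n x)) by assumption.
    pose proof (sqrt_pos (vec3_norm2 n x)); nra. }
  assert (Hyx : Cre (tens_form n T y x) = h).
  { unfold tens_form; fold v; unfold y.
    rewrite vec3_inner_scal_l, Cre_CofR_mul, <- vec3_norm2_inner, <- Hhh; field; lra. }
  pose proof (tens_form_polarization n T x y HT) as Hpol.
  pose proof (Hform (vadd x y)); pose proof (Hform (vsub x y)).
  pose proof (vec3_norm2_parallelogram n x y).
  pose proof (Rle_abs (Cre (tens_form n T (vadd x y) (vadd x y)))).
  pose proof (Rle_abs (- Cre (tens_form n T (vsub x y) (vsub x y)))) as Hm.
  rewrite Rabs_Ropp in Hm.
  nra.
Qed.

Lemma Gcoef_real n T P p q r : tensor_hermitian n T ->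
  is_hermitian_mat n (P p) -> is_hermitian_mat n (P q) -> is_hermitian_mat n (P r) ->
  Cim (Gcoef n T P p q r) = 0.
Proof.
  intros HT Hp Hq Hr.
  enough (E : Cconj (Gcoef n T P p q r) = Gcoef n T P p q r).
  { apply (f_equal Cim) in E; simpl in E; lra. }
  unfold Gcoef; rewrite Csum_conj; symmetry.
  rewrite Csum_swap; apply Csum_ext; intros a Ha; rewrite Csum_conj; apply Csum_ext; intros b Hb.
  rewrite Csum_conj, Csum_swap; apply Csum_ext; intros c Hc; rewrite Csum_conj.
  apply Csum_ext; intros d Hd.
  rewrite Csum_conj, Csum_swap; apply Csum_ext; intros e He; rewrite Csum_conj.
  apply Csum_ext; intros f Hf.
  rewrite (HT a b c d e f), (Hp a b), (Hq c d), (Hr e f) by auto.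
  unfold Cmul3; rewrite !Cconj_mul, !Cconj_involutive; ring.
Qed.

Lemma game_pi_sign n T P p q r : Cim (Gcoef n T P p q r) = 0 ->
  CofR (game_pi n T P p q r * game_sign n T P p q r) =
  Cmul (CofR (/ Zsum n T P)) (Gcoef n T P p q r).
Proof.
  intros Him; unfold game_pi, game_sign, Cabs, Cnorm2.
  destruct (Gcoef n T P p q r) as [g g']; simpl in *; subst g'.
  replace (g * g + 0 * 0) with (Rsqr g) by (unfold Rsqr; ring).
  rewrite sqrt_Rsqr_abs; unfold Rdiv.
  destruct (Rle_dec 0 g); [rewrite Rabs_right by lra | rewrite Rabs_left by lra];
    apply Cplx_eq; simpl; ring.
Qed.

Lemma good_basis_expect3_contract n T P z : good_basis n P ->
  Csum (n * n) (fun p => Csum (n * n) (fun q => Csum (n * n) (fun r =>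
    Cmul (Gcoef n T P p q r) (expect3 n z (P p) (P q) (P r))))) =
  Cmul (CofR (INR n ^ 3)) (tens_form n T z z).
Proof.
  intros HP; rewrite tens_form_expand.
  transitivity (Csum (n * n) (fun p => Csum (n * n) (fun q => Csum (n * n) (fun r =>
    Csum n (fun a => Csum n (fun b => Csum n (fun c =>
    Csum n (fun a' => Csum n (fun b' => Csum n (fun c' =>
      Cmul (Gcoef n T P p q r) (Cmul (Cconj (z a b c))
        (Cmul (Cmul3 (P p a a') (P q b b') (P r c c')) (z a' b' c'))))))))))))).
  { do 3 (apply Csum_ext; intros); unfold expect3.
    do 6 (rewrite Csum_mul_l; apply Csum_ext; intros); reflexivity. }
  rewrite Csum_swap36; symmetry.
  do 6 (rewrite Csum_mul_l; apply Csum_ext; intros).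
  rename i into a, i0 into b, i1 into c, i2 into a', i3 into b', i4 into c'.
  transitivity (Cmul (Cmul (Cconj (z a b c)) (z a' b' c'))
    (Csum (n * n) (fun p => Csum (n * n) (fun q => Csum (n * n) (fun r =>
      Cmul (Gcoef n T P p q r) (Cmul3 (P p a a') (P q b b') (P r c c'))))))).
  { rewrite good_basis_expand3 by auto; ring. }
  do 3 (rewrite Csum_mul_l; apply Csum_ext; intros); ring.
Qed.

(** * The classical bias *)

Definition sign_mat (n : nat) (P : nat -> Mat) (a : nat -> R) : Mat :=
  fun i i' => Csum (n * n) (fun p => Cmul (CofR (a p)) (Cconj (P p i i'))).

Lemma trilinear_sign_mat n T P a b c :
  Csum (n * n) (fun p => Csum (n * n) (fun q => Csum (n * n) (fun r =>
    Cmul (Gcoef n T P p q r) (CofR (a p * b q * c r))))) =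
  trilinear n T (sign_mat n P a) (sign_mat n P b) (sign_mat n P c).
Proof.
  transitivity (Csum (n * n) (fun p => Csum (n * n) (fun q => Csum (n * n) (fun r =>
    Csum n (fun i => Csum n (fun i' => Csum n (fun j =>
    Csum n (fun j' => Csum n (fun k => Csum n (fun k' =>
      Cmul (Cmul (T i i' j j' k k') (Cconj (Cmul3 (P p i i') (P q j j') (P r k k'))))
        (CofR (a p * b q * c r)))))))))))).
  { do 3 (apply Csum_ext; intros); unfold Gcoef.
    do 6 (rewrite Csum_mul_r; apply Csum_ext; intros); reflexivity. }
  rewrite Csum_swap36; unfold trilinear; do 6 (apply Csum_ext; intros).
  unfold sign_mat; rewrite Csum_mul3.
  symmetry; do 3 (rewrite Csum_mul_l; apply Csum_ext; intros).
  unfold Cmul3; rewrite !Cconj_mul, !CofR_mul; ring.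
Qed.

Lemma mat_norm_sign_mat n P a : good_basis n P ->
  (forall p, (p < n * n)%nat -> a p = 1 \/ a p = -1) ->
  mat_norm n (sign_mat n P a) = sqrt (INR n ^ 3).
Proof.
  intros HP Ha; destruct HP as (_ & _ & Horth & Hherm & Hsq); unfold mat_norm; f_equal.
  transitivity (Cre (Csum n (fun i => Csum n (fun i' => Csum (n * n) (fun p =>
    Csum (n * n) (fun q => Cmul (CofR (a p * a q)) (Cmul (Cconj (P q i i')) (P p i i')))))))).
  { rewrite Cre_Csum; apply Rsum_ext; intros i Hi; rewrite Cre_Csum.
    apply Rsum_ext; intros i' Hi'; rewrite Cnorm2_Cre_conj; f_equal.
    unfold sign_mat; rewrite Csum_conj, Csum_mul_r; apply Csum_ext; intros p _.
    rewrite Csum_mul_l; apply Csum_ext; intros q _.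
    rewrite Cconj_mul, Cconj_involutive, Cconj_CofR, CofR_mul; ring. }
  rewrite <- Csum_swap22.
  transitivity (Cre (Csum (n * n) (fun p => CofR (INR n)))).
  { f_equal; apply Csum_ext; intros p Hp.
    assert (Hpq : forall q, Csum n (fun i => Csum n (fun i' =>
        Cmul (CofR (a p * a q)) (Cmul (Cconj (P q i i')) (P p i i')))) =
      Cmul (CofR (a p * a q)) (hs_inner n (P q) (P p))).
    { intros q; unfold hs_inner; rewrite Csum_mul_l; apply Csum_ext; intros.
      rewrite Csum_mul_l; reflexivity. }
    rewrite (Csum_single _ _ p Hp).
    - rewrite Hpq, hs_inner_hermitian_involution by auto.
      destruct (Ha p Hp) as [-> | ->]; apply Cplx_eq; simpl; ring.
    - intros q Hq Hqp; rewrite Hpq, Horth by auto; ring. }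
  rewrite Csum_CofR, mult_INR; simpl; ring.
Qed.

Definition mscal (c : R) (M : Mat) : Mat := fun i i' => Cmul (CofR c) (M i i').

Lemma mat_norm_mscal n c M : mat_norm n (mscal c M) = Rabs c * mat_norm n M.
Proof.
  unfold mat_norm.
  rewrite (Rsum_ext _ _ (fun i => c * c * Rsum n (fun i' => Cnorm2 (M i i')))), Rsum_scal.
  - rewrite sqrt_mult, <- sqrt_Rsqr_abs by
      (apply Rle_0_sqr || (repeat (apply Rsum_ge0; intros); apply Cnorm2_ge0)); reflexivity.
  - intros; rewrite <- Rsum_scal; apply Rsum_ext; intros; apply Cnorm2_CofR_mul.
Qed.

Lemma trilinear_mscal n T u v w U V W :
  trilinear n T (mscal u U) (mscal v V) (mscal w W) =
  Cmul (CofR (u * v * w)) (trilinear n T U V W).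
Proof.
  unfold trilinear; do 6 (rewrite Csum_mul_l; apply Csum_ext; intros).
  unfold mscal, Cmul3; rewrite !CofR_mul; ring.
Qed.

Lemma Cabs_trilinear_le n T norm3 U V W :
  (forall r, norm3eps_set n T r -> r <= norm3) ->
  0 < mat_norm n U -> 0 < mat_norm n V -> 0 < mat_norm n W ->
  Cabs (trilinear n T U V W) <= mat_norm n U * mat_norm n V * mat_norm n W * norm3.
Proof.
  intros Hub HU HV HW.
  set (u := mat_norm n U) in *; set (v := mat_norm n V) in *; set (w := mat_norm n W) in *.
  assert (Hunit : forall M, 0 < mat_norm n M -> mat_norm n (mscal (/ mat_norm n M) M) <= 1).
  { intros M HM; rewrite mat_norm_mscal, Rabs_right by (apply Rle_ge, Rlt_le, Rinv_0_lt_compat, HM).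
    rewrite Rinv_l by lra; lra. }
  assert (Hle : Cabs (trilinear n T (mscal (/ u) U) (mscal (/ v) V) (mscal (/ w) W)) <= norm3)
    by (apply Hub; exists (mscal (/ u) U), (mscal (/ v) V), (mscal (/ w) W);
        repeat split; try apply Hunit; assumption).
  rewrite trilinear_mscal, Cabs_CofR_mul, Rabs_right in Hle
    by (apply Rle_ge, Rlt_le, Rmult_lt_0_compat; [apply Rmult_lt_0_compat|];
        apply Rinv_0_lt_compat; assumption).
  replace (Cabs (trilinear n T U V W))
    with (u * v * w * (/ u * / v * / w * Cabs (trilinear n T U V W))) by (field; lra).
  apply Rmult_le_compat_l; [|assumption].
  apply Rlt_le, Rmult_lt_0_compat; [apply Rmult_lt_0_compat|]; assumption.
Qed.

Lemma classical_sum_trilinear n T P a b c : tensor_hermitian n T ->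
  (forall p, (p < n * n)%nat -> is_hermitian_mat n (P p)) ->
  Rsum (n * n) (fun x => Rsum (n * n) (fun y => Rsum (n * n) (fun z =>
    game_pi n T P x y z * game_sign n T P x y z * a x * b y * c z))) =
  / Zsum n T P * Cre (trilinear n T (sign_mat n P a) (sign_mat n P b) (sign_mat n P c)).
Proof.
  intros HT Hherm; rewrite <- trilinear_sign_mat, <- Cre_CofR_mul, Csum_mul_l, Cre_Csum.
  apply Rsum_ext; intros x Hx; rewrite Csum_mul_l, Cre_Csum.
  apply Rsum_ext; intros y Hy; rewrite Csum_mul_l, Cre_Csum.
  apply Rsum_ext; intros z Hz.
  replace (game_pi n T P x y z * game_sign n T P x y z * a x * b y * c z) with
    (Cre (Cmul (CofR (game_pi n T P x y z * game_sign n T P x y z)) (CofR (a x * b y * c z))))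
    by (simpl; ring).
  rewrite game_pi_sign by (apply Gcoef_real; auto).
  f_equal; ring.
Qed.

Lemma classical_value_le n T P norm3 r : good_basis n P -> tensor_hermitian n T ->
  0 < Zsum n T P -> (1 <= n)%nat ->
  (forall x, norm3eps_set n T x -> x <= norm3) ->
  classical_value_set (n * n) (game_pi n T P) (game_sign n T P) r ->
  r <= / Zsum n T P * sqrt (INR n ^ 3) ^ 3 * norm3.
Proof.
  intros HP HT HZ Hn Hub (a & b & c & Ha & Hb & Hc & ->).
  assert (Hs : 0 < sqrt (INR n ^ 3)) by (apply sqrt_lt_R0, pow_lt, lt_0_INR; lia).
  rewrite classical_sum_trilinear by (auto; apply HP).
  pose proof (Rabs_Cre_le_Cabs (trilinear n T (sign_mat n P a) (sign_mat n P b) (sign_mat n P c))).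
  pose proof (Cabs_trilinear_le n T norm3 (sign_mat n P a) (sign_mat n P b) (sign_mat n P c) Hub).
  rewrite !mat_norm_sign_mat in * by auto.
  rewrite Rabs_mult, Rabs_right by (apply Rle_ge, Rlt_le, Rinv_0_lt_compat, HZ).
  rewrite Rmult_assoc; apply Rmult_le_compat_l; [apply Rlt_le, Rinv_0_lt_compat, HZ|].
  replace (sqrt (INR n ^ 3) ^ 3) with (sqrt (INR n ^ 3) * sqrt (INR n ^ 3) * sqrt (INR n ^ 3))
    by ring.
  eapply Rle_trans; [eassumption|]; auto.
Qed.

Lemma classical_value_set_lub_ge0 N pi s beta :
  is_lub (classical_value_set N pi s) beta -> 0 <= beta.
Proof.
  intros [Hub _]; eapply Rle_trans; [apply (Rabs_pos (Rsum N (fun x => Rsum N (fun y =>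
    Rsum N (fun z => pi x y z * s x y z * 1 * 1 * 1)))))|].
  apply Hub; exists (fun _ => 1), (fun _ => 1), (fun _ => 1); auto 6.
Qed.

Lemma classical_bias_le n T P norm3 beta : good_basis n P -> tensor_hermitian n T ->
  0 < Zsum n T P -> (1 <= n)%nat ->
  is_lub (norm3eps_set n T) norm3 ->
  is_lub (classical_value_set (n * n) (game_pi n T P) (game_sign n T P)) beta ->
  beta <= / Zsum n T P * Rpower (INR n) (9 / 2) * norm3.
Proof.
  intros HP HT HZ Hn [Hnorm3_ub _] [_ Hbeta_least].
  assert (H0 : 0 < INR n) by (apply lt_0_INR; lia).
  replace (Rpower (INR n) (9 / 2)) with (sqrt (INR n ^ 3) ^ 3).
  - apply Hbeta_least; intros r Hr; apply (classical_value_le n T P norm3 r); assumption.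
  - rewrite <- (Rpower_pow 3 (INR n) H0), <- Rpower_sqrt, <- Rpower_pow, !Rpower_mult
      by apply exp_pos.
    f_equal; simpl; field.
Qed.

(** * The entangled bias *)

Definition vec3_unit0 : Vec3 := fun i j k => Cmul (delta i 0) (Cmul (delta j 0) (delta k 0)).

Lemma vec3_norm_unit0 n : (1 <= n)%nat -> vec3_norm n vec3_unit0 = 1.
Proof.
  intros Hn; rewrite vec3_norm_sqrt, vec3_norm2_inner.
  replace (vec3_inner n vec3_unit0 vec3_unit0) with C1; [apply sqrt_1|].
  unfold vec3_inner, vec3_unit0.
  do 3 (rewrite (Csum_single n _ 0); [| lia | intros i _ Hi;
    repeat (apply Csum_zero; intros); rewrite (delta_neq i 0 Hi); apply Cplx_eq; simpl; ring]).
  rewrite delta_eq; apply Cplx_eq; simpl; ring.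
Qed.

Lemma entangled_value_set_tens_form n T P w : good_basis n P -> tensor_hermitian n T ->
  0 < Zsum n T P -> vec3_norm n w = 1 ->
  entangled_value_set (n * n) (game_pi n T P) (game_sign n T P)
    (INR n ^ 3 / Zsum n T P * Cabs (tens_form n T w w)).
Proof.
  intros HP HT HZ Hw; pose proof HP as (_ & _ & _ & Hherm & Hsq).
  exists n, w, P, P, P; repeat split; auto.
  assert (E : Csum (n * n) (fun x => Csum (n * n) (fun y => Csum (n * n) (fun z =>
      Cmul (CofR (game_pi n T P x y z * game_sign n T P x y z)) (expect3 n w (P x) (P y) (P z))))) =
    Cmul (CofR (/ Zsum n T P)) (Csum (n * n) (fun x => Csum (n * n) (fun y =>
      Csum (n * n) (fun z => Cmul (Gcoef n T P x y z) (expect3 n w (P x) (P y) (P z))))))).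
  { do 3 (rewrite Csum_mul_l; apply Csum_ext; intros).
    rewrite game_pi_sign by (apply Gcoef_real; auto); ring. }
  rewrite E, good_basis_expect3_contract, !Cabs_CofR_mul by assumption.
  rewrite !Rabs_right
    by (apply Rle_ge; (apply pow_le, pos_INR || apply Rlt_le, Rinv_0_lt_compat, HZ)).
  unfold Rdiv; ring.
Qed.

Lemma entangled_bias_ge n T P norm2 betastar : good_basis n P -> tensor_hermitian n T ->
  0 < Zsum n T P -> (1 <= n)%nat ->
  is_lub (norm2eps_set n T) norm2 ->
  is_lub (entangled_value_set (n * n) (game_pi n T P) (game_sign n T P)) betastar ->
  0 <= norm2 /\ / Zsum n T P * INR n ^ 3 * norm2 <= betastar.
Proof.
  intros HP HT HZ Hn [Hnorm2_ub Hnorm2_least] [Hbs_ub _].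
  assert (Hn0 : 0 < INR n) by (apply lt_0_INR; lia).
  assert (Hm : 0 < INR n ^ 3) by (apply pow_lt, Hn0).
  set (K := Zsum n T P * betastar / INR n ^ 3).
  assert (Hunit : forall w, vec3_norm n w = 1 -> Cabs (tens_form n T w w) <= K).
  { intros w Hw; pose proof (Hbs_ub _ (entangled_value_set_tens_form n T P w HP HT HZ Hw)).
    unfold K; apply Rmult_le_reg_l with (INR n ^ 3 / Zsum n T P);
      [apply Rdiv_lt_0_compat; assumption|].
    replace (INR n ^ 3 / Zsum n T P * (Zsum n T P * betastar / INR n ^ 3)) with betastar
      by (field; lra).
    assumption. }
  assert (HK : 0 <= K).
  { eapply Rle_trans; [apply Cabs_ge0 | apply (Hunit _ (vec3_norm_unit0 n Hn))]. }
  split.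
  - eapply Rle_trans; [apply sqrt_pos|]; apply Hnorm2_ub.
    exists vec3_unit0; split; [rewrite vec3_norm_unit0 by assumption; lra | reflexivity].
  - assert (Hnorm2 : norm2 <= K).
    { apply Hnorm2_least; intros r (x & Hx & ->).
      apply (hermitian_apply_norm_le n T K HT HK (tens_form_bound_of_unit n T K Hunit) x Hx). }
    apply Rle_trans with (/ Zsum n T P * INR n ^ 3 * K).
    + apply Rmult_le_compat_l; [apply Rmult_le_pos; [apply Rlt_le, Rinv_0_lt_compat|]|]; lra.
    + unfold K; right; field; lra.
Qed.

Lemma bias_ratio_le x Z norm2 norm3 beta betastar :
  0 < x -> 0 < Z -> 0 <= beta -> 0 <= norm2 ->
  beta <= / Z * Rpower x (9 / 2) * norm3 -> / Z * x ^ 3 * norm2 <= betastar ->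
  Rpower x (- (3 / 2)) * (norm2 / norm3) * beta <= betastar.
Proof.
  intros Hx HZ Hbeta Hnorm2 Hclassical Hentangled.
  assert (HZi : 0 < / Z) by (apply Rinv_0_lt_compat, HZ).
  assert (Hpow : 0 < Rpower x (9 / 2)) by apply exp_pos.
  assert (Hpow' : 0 < Rpower x (- (3 / 2))) by apply exp_pos.
  assert (Hx3 : Rpower x (- (3 / 2)) * Rpower x (9 / 2) = x ^ 3).
  { rewrite <- Rpower_plus, <- Rpower_pow by assumption; f_equal; simpl; field. }
  assert (Hnorm3 : 0 <= norm3).
  { destruct (Rle_lt_dec 0 norm3) as [|Hneg]; [assumption|].
    assert (0 < / Z * Rpower x (9 / 2)) by (apply Rmult_lt_0_compat; assumption); nra. }
  destruct (Req_dec norm3 0) as [E|E].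
  (* Then norm2 / norm3 = 0 by the convention x / 0 = 0. *)
  { assert (0 <= / Z * x ^ 3 * norm2)
      by (apply Rmult_le_pos; [apply Rmult_le_pos; [lra | apply pow_le; lra] | assumption]).
    rewrite E; unfold Rdiv; rewrite Rinv_0, Rmult_0_r, Rmult_0_r, Rmult_0_l; lra. }
  apply Rle_trans with
    (Rpower x (- (3 / 2)) * (norm2 / norm3) * (/ Z * Rpower x (9 / 2) * norm3)).
  - apply Rmult_le_compat_l; [|assumption].
    apply Rmult_le_pos; [lra|]; apply Rmult_le_pos; [lra|]; apply Rlt_le, Rinv_0_lt_compat; lra.
  - replace (Rpower x (- (3 / 2)) * (norm2 / norm3) * (/ Z * Rpower x (9 / 2) * norm3))
      with (/ Z * (Rpower x (- (3 / 2)) * Rpower x (9 / 2)) * norm2) by (field; lra).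
    rewrite Hx3; assumption.
Qed.

Theorem mainTheorem9 (n : nat) (T : Tens6) (P : nat -> Mat)
  (norm2 norm3 beta betastar : R) :
  (1 <= n)%nat ->
  tensor_nonzero n T ->
  tensor_hermitian n T ->
  good_basis n P ->
  0 < Zsum n T P ->
  is_lub (norm2eps_set n T) norm2 ->
  is_lub (norm3eps_set n T) norm3 ->
  is_lub (classical_value_set (n * n) (game_pi n T P) (game_sign n T P)) beta ->
  is_lub (entangled_value_set (n * n) (game_pi n T P) (game_sign n T P)) betastar ->
  beta <= / Zsum n T P * Rpower (INR n) (9 / 2) * norm3 /\
  / Zsum n T P * (INR n ^ 3) * norm2 <= betastar /\
  Rpower (INR n) (- (3 / 2)) * (norm2 / norm3) * beta <= betastar.
Proof.
  intros Hn _ HT HP HZ Hnorm2 Hnorm3 Hbeta Hbetastar.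
  pose proof (classical_bias_le n T P norm3 beta HP HT HZ Hn Hnorm3 Hbeta) as Hclassical.
  destruct (entangled_bias_ge n T P norm2 betastar HP HT HZ Hn Hnorm2 Hbetastar)
    as [Hnorm2_ge0 Hentangled].
  repeat split; try assumption.
  apply bias_ratio_le with (Z := Zsum n T P); try assumption.
  - apply lt_0_INR; lia.
  - apply (classical_value_set_lub_ge0 _ _ _ _ Hbeta).
Qed.
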